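(* For any positive integers $n$ and $m\ge 2$ and any $\sigma_1^2,\dots,\sigma_n^2>0$, $\mathrm{Ent}(\sigma^2_{G^{r}})\le 8\ln(m)$.
   Context: For a vector $a=(a_i)_{i\in S}$ with nonnegative entries and positive sum, $\mathrm{Ent}(a)=-\sum_i\hat a_i\ln\hat a_i$ with $\hat a_i=a_i/\sum_j a_j$. For $S\subset[n]$, $\sigma^2_S=(\sigma_i^2)_{i\in S}$. Let $\underline\sigma^2=\min_i\sigma_i^2$ and for $j=1,\dots,k$ (covering $[n]$) let $G_j=\{i\in[n]:2^{j-1}\le\sigma_i^2/\underline\sigma^2<2^j\}$. For each $j$ with $|G_j|\le 2m$ set $G'_j=G_j$; for each $j$ with $|G_j|>2m$ choose $G'_j\subset G_j$ with $|G'_j|=2m$; $G^{r}=\bigcup_jG'_j$, where the choices of the $G'_j$ are made so that $\mathrm{Ent}(\sigma^2_{G^{r}})$ is maximized. *)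

From HB Require Import structures.
From mathcomp Require Import all_boot all_order all_algebra.
From mathcomp Require Import boolp reals exp.
Set Implicit Arguments. Unset Strict Implicit. Unset Printing Implicit Defensive.
Import Order.TTheory GRing.Theory Num.Theory.
Local Open Scope ring_scope.

Section Defs.
Variables (R : realType) (n : nat).

Definition Ent (S : {set 'I_n}) (a : 'I_n -> R) : R :=
  let s := \sum_(i in S) a i in
  - \sum_(i in S) (a i / s) * ln (a i / s).

Definition Gj (sigma2 : 'I_n -> R) (smin : R) (j : nat) : {set 'I_n} :=
  [set i | ((2:R) ^+ j.-1 <= sigma2 i / smin) && (sigma2 i / smin < (2:R) ^+ j)].

Definition admissible (m : nat) (sigma2 : 'I_n -> R) (smin : R)
    (Gp : nat -> {set 'I_n}) : Prop :=
  forall j : nat, (0 < j)%N ->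
    [/\ Gp j \subset Gj sigma2 smin j,
        (#|Gj sigma2 smin j| <= 2 * m)%N -> Gp j = Gj sigma2 smin j &
        (2 * m < #|Gj sigma2 smin j|)%N -> #|Gp j| = (2 * m)%N].

Definition Gr (Gp : nat -> {set 'I_n}) : {set 'I_n} :=
  [set i | `[< exists j : nat, (0 < j)%N /\ i \in Gp j >]].

End Defs.

From HB Require Import structures.
From mathcomp Require Import all_boot all_order all_algebra.
From mathcomp Require Import boolp reals exp.
From mathcomp Require Import ring lra zify.
Set Implicit Arguments.
Unset Strict Implicit.
Unset Printing Implicit Defensive.
Import Order.TTheory GRing.Theory Num.Theory.
Local Open Scope ring_scope.

(* Measure every selected coordinate by its depth d, the number of bands
   between its band and the highest selected band.  A coordinate of depth d
   carries at most a 2^(1-d) fraction of the total mass, and each depth holds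
   at most 2m coordinates.  Gibbs' inequality against the weights
   2^-(d+1) / (2m), whose total is at most 1, bounds the entropy by
   ln 2 * E[d + 1] + ln (2m).  Splitting d + 1 <= (D + 1) + (d - D)_+ with
   8m <= 2^D, the deep tail adds at most 1 to E[d + 1], so the entropy is at
   most ln (2m * 2^(D+2)) <= ln (m^8) for a suitable D. *)

Section Entropy.
Variable R : realType.

Lemma sub_le_mul_ln_div (p w : R) : 0 < p -> 0 < w -> p - w <= p * ln (p / w).
Proof.
move=> p0 w0.
have wp0 : 0 < w / p by exact: divr_gt0.
have : -1 < w / p - 1 by lra.
move/le_ln1Dx; rewrite addrCA subrr addr0.
rewrite -invf_div lnV ?posrE ?divr_gt0 // => hln.
have := ler_wpM2l (ltW p0) hln.
rewrite mulrBr mulr1 mulrN invf_div mulrCA divff ?gt_eqF // mulr1; lra.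
Qed.

Lemma ler_sum_mem n (S : {set 'I_n}) (a : 'I_n -> R) (i0 : 'I_n) :
  {in S, forall i, 0 <= a i} -> i0 \in S -> a i0 <= \sum_(i in S) a i.
Proof.
move=> a0 i0S; rewrite (bigD1 i0) //= lerDl.
by apply: sumr_ge0 => i /andP[iS _]; exact: a0.
Qed.

Lemma sumr_gt0_mem n (S : {set 'I_n}) (a : 'I_n -> R) (i0 : 'I_n) :
  {in S, forall i, 0 < a i} -> i0 \in S -> 0 < \sum_(i in S) a i.
Proof.
move=> a0 i0S; apply: lt_le_trans (a0 _ i0S) (ler_sum_mem _ i0S).
by move=> i /a0/ltW.
Qed.

Lemma Ent_le_cross_entropy n (S : {set 'I_n}) (a w : 'I_n -> R) :
  {in S, forall i, 0 < a i} -> {in S, forall i, 0 < w i} ->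
  \sum_(i in S) w i <= 1 ->
  Ent S a <= - \sum_(i in S) a i / (\sum_(j in S) a j) * ln (w i).
Proof.
move=> a0 w0 sum_w; rewrite /Ent; set s := \sum_(j in S) a j.
have [-> | [i0 i0S]] := set_0Vmem S; first by rewrite !big_set0 oppr0.
have s0 : 0 < s := sumr_gt0_mem a0 i0S.
have sum_p : \sum_(i in S) a i / s = 1 by rewrite -mulr_suml divff ?gt_eqF.
rewrite lerN2 -subr_ge0 -sumrB.
have term i : i \in S ->
    a i / s - w i <= a i / s * ln (a i / s) - a i / s * ln (w i).
  move=> iS; have p0 : 0 < a i / s by rewrite divr_gt0 ?a0.
  by rewrite -mulrBr -ln_div ?posrE ?w0 //; exact: sub_le_mul_ln_div (w0 _ iS).
by apply: le_trans (ler_sum _ term); rewrite sumrB sum_p subr_ge0.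
Qed.

Lemma sum_halfX (N : nat) : \sum_(k < N) (2^-1 : R) ^+ k.+1 = 1 - 2^-1 ^+ N.
Proof.
elim: N => [|N IH]; first by rewrite big_ord0 expr0 subrr.
by rewrite big_ord_recr /= IH exprS; lra.
Qed.

Lemma sum_halfX_excess_le (N D : nat) :
  \sum_(k < N) (2^-1 : R) ^+ k * (k - D)%:R <= 2 * 2^-1 ^+ D.
Proof.
(* The partial sums plus this tail term do not depend on N. *)
suff <- : \sum_(k < N) (2^-1 : R) ^+ k * (k - D)%:R
          + 2 * (N - D).+1%:R * 2^-1 ^+ maxn N D = 2 * 2^-1 ^+ D.
  by rewrite lerDl !mulr_ge0 ?exprn_ge0 ?invr_ge0.
elim: N => [|N IH]; first by rewrite big_ord0 add0r sub0n max0n mulr1.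
rewrite big_ord_recr /= -addrA -[RHS]IH; congr (_ + _).
have [DleN | NltD] := leqP D N.
  have -> : maxn N.+1 D = N.+1 by lia.
  have -> : (N.+1 - D = (N - D).+1)%N by lia.
  by rewrite exprS -!natr1; field.
have -> : maxn N.+1 D = D by lia.
have -> : (N.+1 - D = 0)%N by lia.
have -> : (N - D = 0)%N by lia.
by rewrite mulr0 add0r.
Qed.

Lemma sum_le_card_fibers n (S : {set 'I_n}) (d : 'I_n -> nat) (N c : nat)
    (F : nat -> R) :
  (forall k, 0 <= F k) -> {in S, forall i, d i < N}%N ->
  (forall k, #|[set i in S | d i == k]| <= c)%N ->
  \sum_(i in S) F (d i) <= c%:R * \sum_(k < N) F k.
Proof.
move=> F0 dN card_fiber.
case: N dN => [|N] dN.
  by rewrite big1 ?big_ord0 ?mulr0 // => i /dN.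
rewrite (partition_big (fun i => inord (d i) : 'I_N.+1) predT) //= mulr_sumr.
apply: ler_sum => k _.
rewrite (eq_bigr (fun _ => F k)); last first.
  by move=> i /andP[iS /eqP <-]; rewrite inordK ?dN.
rewrite sumr_const -[F k *+ _]mulr_natl ler_wpM2r // ler_nat.
apply: leq_trans (card_fiber k); apply/subset_leq_card/subsetP => i.
by rewrite !inE => /andP[iS /eqP <-]; rewrite iS inordK ?eqxx ?dN.
Qed.

Lemma mean_depth_le n (S : {set 'I_n}) (p : 'I_n -> R) (d : 'I_n -> nat)
    (c D : nat) :
  {in S, forall i, 0 <= p i} -> \sum_(i in S) p i = 1 ->
  {in S, forall i, p i <= 2 * 2^-1 ^+ d i} ->
  (forall k, #|[set i in S | d i == k]| <= c)%N -> (4 * c <= 2 ^ D)%N ->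
  \sum_(i in S) p i * (d i).+1%:R <= D.+2%:R.
Proof.
move=> p0 sum_p p_le card_fiber cD; set r : R := 2^-1.
have term i : i \in S ->
    p i * (d i).+1%:R <= p i * D.+1%:R + 2 * (r ^+ d i * (d i - D)%:R).
  move=> iS; have d_split : (d i).+1%:R <= D.+1%:R + (d i - D)%:R :> R.
    by rewrite -natrD ler_nat; lia.
  have := ler_wpM2l (p0 i iS) d_split.
  have := ler_wpM2r (ler0n R (d i - D)) (p_le i iS); nra.
apply: le_trans (ler_sum _ term) _.
rewrite big_split /= -mulr_suml sum_p mul1r -mulr_sumr.
set N := (\max_(i in S) d i).+1.
have fibers : \sum_(i in S) r ^+ d i * (d i - D)%:R
              <= c%:R * \sum_(k < N) r ^+ k * (k - D)%:R.
  apply: (sum_le_card_fibers (F := fun k => r ^+ k * (k - D)%:R)) card_fiber.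
    by move=> k; rewrite mulr_ge0 ?exprn_ge0 ?invr_ge0.
  by move=> i iS; rewrite ltnS; exact: leq_bigmax_cond.
have excess := sum_halfX_excess_le N D.
have c_small : 4 * c%:R * r ^+ D <= 1.
  rewrite /r exprVn ler_pdivrMr ?exprn_gt0 // mul1r.
  by rewrite -natrX -(natrM R 4) ler_nat.
have := ler_wpM2l (ler0n R c) excess; rewrite -/r -[D.+2]addn1 natrD; lra.
Qed.

Lemma Ent_le_depth n (S : {set 'I_n}) (a : 'I_n -> R) (d : 'I_n -> nat)
    (c D : nat) :
  (0 < c)%N -> {in S, forall i, 0 < a i} ->
  (forall k, #|[set i in S | d i == k]| <= c)%N ->
  {in S, forall i, a i / \sum_(j in S) a j <= 2 * 2^-1 ^+ d i} ->
  (4 * c <= 2 ^ D)%N ->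
  Ent S a <= ln (c * 2 ^ D.+2)%:R.
Proof.
move=> c_gt0 a0 card_fiber p_le cD; set r : R := 2^-1.
have [-> | [i0 i0S]] := set_0Vmem S.
  by rewrite /Ent !big_set0 oppr0 ln_ge0 // ler1n muln_gt0 c_gt0 expn_gt0.
set s := \sum_(j in S) a j in p_le *.
have s0 : 0 < s := sumr_gt0_mem a0 i0S.
have c0 : (0 : R) < c%:R by rewrite ltr0n.
pose w i := r ^+ (d i).+1 / c%:R.
have w0 : {in S, forall i, 0 < w i}.
  by move=> i _; rewrite divr_gt0 ?exprn_gt0 ?invr_gt0.
have sum_w : \sum_(i in S) w i <= 1.
  set N := (\max_(i in S) d i).+1.
  have : \sum_(i in S) w i <= c%:R * \sum_(k < N) r ^+ k.+1 / c%:R.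
    apply: (sum_le_card_fibers (F := fun k => r ^+ k.+1 / c%:R) _ _ card_fiber).
      by move=> k; rewrite divr_ge0 ?exprn_ge0 ?invr_ge0 ?ler0n.
    by move=> i iS; rewrite ltnS; exact: leq_bigmax_cond.
  move/le_trans; apply; rewrite -mulr_suml mulrCA divff ?gt_eqF // mulr1.
  by rewrite sum_halfX lerBlDr lerDl exprn_ge0 ?invr_ge0.
apply: le_trans (Ent_le_cross_entropy a0 w0 sum_w) _.
rewrite -/s -sumrN.
have neg_ln_w i : - ln (w i) = (d i).+1%:R * ln 2 + ln c%:R.
  rewrite ln_div ?posrE ?exprn_gt0 ?invr_gt0 // lnXn ?invr_gt0 //.
  by rewrite lnV ?posrE // mulNrn mulr_natl; lra.
under eq_bigr => i _ do rewrite -mulrN neg_ln_w mulrDr mulrA.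
rewrite big_split /= -!mulr_suml.
have sum_p : \sum_(i in S) a i / s = 1 by rewrite -mulr_suml divff ?gt_eqF.
have mean := mean_depth_le (p := fun i => a i / s) _ sum_p p_le card_fiber cD.
rewrite -/s divff ?gt_eqF // mul1r.
rewrite natrM natrX lnM ?posrE ?exprn_gt0 // lnXn // addrC lerD2l.
rewrite -[ln 2 *+ _]mulr_natl ler_pM2r ?ln_gt0 ?ltr1n //.
apply: mean => i iS; by rewrite divr_ge0 ?ltW ?a0.
Qed.

End Entropy.

Lemma exists_pow2_scale m : (2 <= m)%N ->
  exists D, (8 * m <= 2 ^ D)%N /\ (8 * m * 2 ^ D <= m ^ 8)%N.
Proof.
move=> m2; have [m_le2 | m3] := leqP m 2.
  by exists 4%N; have -> : m = 2%N by lia.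
have m8 : (1 < 8 * m)%N by lia.
have /andP[lo hi] := up_log_bounds (isT : (1 < 2)%N) m8.
set D := up_log 2 (8 * m) in lo hi *; exists D; split => //.
have D0 : (0 < D)%N by rewrite up_log_gt0; lia.
have D_le : (2 ^ D <= 16 * m)%N by rewrite -(prednK D0) expnS; lia.
have m6 : (3 ^ 6 <= m ^ 6)%N by rewrite leq_exp2r.
have -> : (m ^ 8 = m * m * m ^ 6)%N by rewrite !expnS expn0; lia.
nia.
Qed.

Section AdmissibleChoice.
Variables (R : realType) (n m : nat) (sigma2 : 'I_n -> R) (smin : R).
Variable Gp : nat -> {set 'I_n}.
Hypothesis Gp_adm : admissible m sigma2 smin Gp.

Lemma card_admissible_le j : (0 < j)%N -> (#|Gp j| <= 2 * m)%N.
Proof.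
move=> j0; have [_ small large] := Gp_adm j0.
have [le | gt] := leqP #|Gj sigma2 smin j| (2 * m).
  by rewrite small.
by rewrite large.
Qed.

Lemma exists_level :
  exists b : 'I_n -> nat, {in Gr Gp, forall i, (0 < b i)%N /\ i \in Gp (b i)}.
Proof.
have /choice[b bP] : forall i, exists j, i \in Gr Gp -> (0 < j)%N /\ i \in Gp j.
  move=> i; have [|iS] := pselect (i \in Gr Gp); last by exists 0%N.
  by rewrite inE => /asboolP[j jP]; exists j.
by exists b.
Qed.

Variable b : 'I_n -> nat.
Hypothesis b_level : {in Gr Gp, forall i, (0 < b i)%N /\ i \in Gp (b i)}.
Let J := \max_(i in Gr Gp) b i.

Lemma level_le_max i : i \in Gr Gp -> (b i <= J)%N.
Proof. exact: leq_bigmax_cond. Qed.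

Lemma card_depth_fiber_le k :
  (#|[set i in Gr Gp | J - b i == k]| <= 2 * m)%N.
Proof.
have [Jk | k_lt_J] := posnP (J - k).
  suff -> : [set i in Gr Gp | (J - b i == k)%N] = set0 by rewrite cards0.
  apply/setP => i; rewrite in_set in_set0.
  apply/negbTE/andP => -[iS /eqP dk].
  by have := (b_level iS).1; have := level_le_max iS; lia.
apply: leq_trans (card_admissible_le k_lt_J); apply/subset_leq_card/subsetP.
move=> i; rewrite inE => /andP[iS /eqP dk].
have -> : (J - k = b i)%N by rewrite -dk; have := level_le_max iS; lia.
exact: (b_level iS).2.
Qed.

Hypotheses (smin_gt0 : 0 < smin) (sigma2_gt0 : forall i, 0 < sigma2 i).

Lemma admissible_band j i : (0 < j)%N -> i \in Gp j ->
  smin * 2 ^+ j.-1 <= sigma2 i < smin * 2 ^+ j.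
Proof.
move=> j0 ij; have [/subsetP/(_ i ij) + _ _] := Gp_adm j0.
rewrite inE => /andP[lo hi].
by rewrite !(mulrC smin) -ler_pdivlMr // -ltr_pdivrMr // lo.
Qed.

Lemma depth_ratio_le i : i \in Gr Gp ->
  sigma2 i / (\sum_(j in Gr Gp) sigma2 j) <= 2 * 2^-1 ^+ (J - b i).
Proof.
move=> iS; have [t tS Jt] : {t | t \in Gr Gp & J = b t}.
  by apply: eq_bigmax_cond; apply/card_gt0P; exists i.
set s := \sum_(j in Gr Gp) sigma2 j.
have t_le_s : sigma2 t <= s by apply: ler_sum_mem tS => j _; exact: ltW.
have s0 : 0 < s := lt_le_trans (sigma2_gt0 t) t_le_s.
have [tb _] := b_level tS; have [ib _] := b_level iS.
have /andP[+ _] := admissible_band tb (b_level tS).2.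
have /andP[_ +] := admissible_band ib (b_level iS).2.
rewrite -Jt exprVn ler_pdivrMr // mulrAC ler_pdivlMr ?exprn_gt0 //.
have pow_J : 2 ^+ b i * 2 ^+ (J - b i) = 2 * 2 ^+ J.-1 :> R.
  by rewrite -exprD subnKC ?level_le_max // -exprS prednK // Jt.
move=> /ltW/(ler_wpM2r (exprn_ge0 (J - b i) (ler0n R 2))) hi ht.
apply: le_trans hi _; rewrite -mulrA pow_J; lra.
Qed.

End AdmissibleChoice.

Theorem lemma1 (R : realType) (n m : nat) (hn : (0 < n)%N) (hm : (2 <= m)%N)
    (sigma2 : 'I_n -> R) (hpos : forall i, 0 < sigma2 i)
    (smin : R) (hmin_att : exists i, sigma2 i = smin)
    (hmin_le : forall i, smin <= sigma2 i)
    (Gp : nat -> {set 'I_n})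
    (hadm : admissible m sigma2 smin Gp)
    (hmax : forall Gq : nat -> {set 'I_n}, admissible m sigma2 smin Gq ->
        Ent (Gr Gq) sigma2 <= Ent (Gr Gp) sigma2) :
  Ent (Gr Gp) sigma2 <= 8 * ln (m%:R).
Proof.
have smin_gt0 : 0 < smin by case: hmin_att => i <-.
have [b b_level] := exists_level Gp.
have [D [D_ge D_le]] := exists_pow2_scale hm.
have fibers := card_depth_fiber_le hadm b_level.
have ratio := depth_ratio_le hadm b_level smin_gt0 hpos.
have cD : (4 * (2 * m) <= 2 ^ D)%N by rewrite mulnA.
have m_gt0 : (0 < m)%N by lia.
apply: le_trans (Ent_le_depth _ (fun i _ => hpos i) fibers ratio cD) _.
  by rewrite muln_gt0.
have scale_gt0 : (0 < 2 * m * 2 ^ D.+2)%N.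
  by rewrite muln_gt0 expn_gt0 andbT; lia.
rewrite mulr_natl -lnXn ?ltr0n // -natrX.
rewrite ler_ln ?posrE ?ltr0n ?expn_gt0 ?m_gt0 // ler_nat.
by apply: leq_trans D_le; rewrite !expnS; lia.
Qed.
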